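(* Let $\{\triangleright\}\subseteq\sigma\subseteq\{\triangleright,\wedge,\mathrm{upd},\sqcup\}$ and let $\mathcal{A}$ be a $\sigma$-algebra that is representable by partial functions and whose atoms are separating. Then $\mathcal{A}$ is the $\sigma$-reduct of a $(\sigma\cup\{;\})$-algebra that is representable by partial functions, whose atoms are separating, and in which composition is completely left-distributive over meets.
   Context: The operations are interpreted on partial functions as: $f \triangleright g = \{(x,y) \in g : x \notin \mathrm{dom}(f)\}$; $f;g=\{(x,z):\exists y\,((x,y)\in f,(y,z)\in g)\}$; $f\wedge g = f\cap g$; $\mathrm{upd}(f,g)(x)$ is $f(x)$ if $f(x)$ defined and $g(x)$ undefined, $g(x)$ if both defined, undefined otherwise; $(f\sqcup g)(x)$ is $f(x)$ if defined, else $g(x)$. An algebra is representable by partial functions if it is isomorphic to an algebra of partial functions (on some base set) with these operations. Define $0 := a\triangleright a$, $a\lhd b := (a\triangleright b)\triangleright b$, $a \le b :\iff a\lhd b = a$. An atom is a minimal nonzero element; atoms are separating if whenever $a\not\le b$ there is an atom $c\le a$ with $c\not\le b$. Composition is completely left-distributive over meets if for every nonempty $S$ with $\bigwedge S$ existing and every $a$, $\bigwedge\{a;s:s\in S\}$ exists and equals $a;\bigwedge S$. *)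

(* Operation symbols: antidomain restriction (▷), meet (∧), update,
   preferential union (⊔), composition (;).  All are binary. *)
Inductive sym : Type := Rs | Meet | Upd | Join | Comp.

(* A (total) interpretation of all five symbols on a carrier T.  A
   sigma-algebra is such a record where only the symbols in sigma matter
   (the other fields are ignored by every notion below). *)
Record ops (T : Type) : Type := Ops {
  op_rs : T -> T -> T;
  op_meet : T -> T -> T;
  op_upd : T -> T -> T;
  op_join : T -> T -> T;
  op_comp : T -> T -> T }.
Arguments Ops {T}.
Arguments op_rs {T}. Arguments op_meet {T}. Arguments op_upd {T}.
Arguments op_join {T}. Arguments op_comp {T}.

Definition op {T : Type} (o : ops T) (s : sym) : T -> T -> T :=
  match s with
  | Rs => op_rs o | Meet => op_meet o | Upd => op_upd o
  | Join => op_join o | Comp => op_comp o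
  end.

(* Partial functions on X, as functional relations (graphs). *)
Definition pfun (X : Type) := X -> X -> Prop.
Definition functional {X : Type} (f : pfun X) : Prop :=
  forall x y z, f x y -> f x z -> y = z.
Definition dom {X : Type} (f : pfun X) (x : X) : Prop := exists y, f x y.

Definition interp {X : Type} (s : sym) (f g : pfun X) : pfun X :=
  match s with
  | Rs => fun x y => g x y /\ ~ dom f x
  | Meet => fun x y => f x y /\ g x y
  | Upd => fun x y => (f x y /\ ~ dom g x) \/ (g x y /\ dom f x)
  | Join => fun x y => f x y \/ (g x y /\ ~ dom f x)
  | Comp => fun x y => exists z, f x z /\ g z y
  end.

Definition representable (sigma : sym -> Prop) {T : Type} (o : ops T) : Prop :=
  exists (X : Type) (h : T -> pfun X),
    (forall a, functional (h a)) /\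
    (forall a b, (forall x y, h a x y <-> h b x y) -> a = b) /\
    (forall s, sigma s -> forall a b x y,
        h (op o s a b) x y <-> interp s (h a) (h b) x y).

Section Derived.
Context {T : Type} (rs : T -> T -> T).

Definition dres (a b : T) : T := rs (rs a b) b.
Definition le (a b : T) : Prop := dres a b = a.

Definition is_zero (a : T) : Prop := a = rs a a.

Definition atom (c : T) : Prop :=
  ~ is_zero c /\ forall d, le d c -> ~ is_zero d -> d = c.

Definition atoms_separating : Prop :=
  forall a b, ~ le a b -> exists c, atom c /\ le c a /\ ~ le c b.

Definition is_glb (S : T -> Prop) (m : T) : Prop :=
  (forall s, S s -> le m s) /\ (forall l, (forall s, S s -> le l s) -> le l m).

Definition comp_left_distr (comp : T -> T -> T) : Prop :=
  forall S : T -> Prop, (exists s, S s) ->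
  forall m, is_glb S m ->
  forall a, is_glb (fun t => exists s, S s /\ t = comp a s) (comp a m).
End Derived.

Definition with_comp {T : Type} (o : ops T) (c : T -> T -> T) : ops T :=
  Ops (op_rs o) (op_meet o) (op_upd o) (op_join o) c.

Definition add_comp (sigma : sym -> Prop) : sym -> Prop :=
  fun s => sigma s \/ s = Comp.

From Stdlib Require Import Setoid.

(* Interpret composition as the constant zero: a ; b := a ▷ a.
   To represent this expansion, double the base set to X × {in, out} and
   send each partial function f on X to its "bipartite lift", which maps
   (x, in) to (y, out) whenever f maps x to y.  Lifting preserves
   functionality and injectivity and commutes with ▷, ∧, upd and ⊔, while
   any composite of two lifts is empty, i.e. it represents the zero a ▷ a.
   The order and the atoms are computed from ▷ alone, so separation of
   atoms is inherited unchanged.  Finally, a composition that ignores its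
   right argument is trivially completely left-distributive over meets,
   given that ≤ is reflexive, which holds in every representable algebra. *)

(* The bipartite lift of a partial function: inputs are tagged [false],
   outputs [true], so lifted functions never compose. *)
Definition lift {X : Type} (f : pfun X) : pfun (X * bool) :=
  fun p q => snd p = false /\ snd q = true /\ f (fst p) (fst q).

Lemma dom_lift {X : Type} (f : pfun X) (x : X) (b : bool) :
  dom (lift f) (x, b) <-> b = false /\ dom f x.
Proof.
  unfold dom, lift; simpl; split.
  - intros [[y b'] [Hb [_ Hf]]]; eauto.
  - intros [Hb [y Hy]]; exists (y, true); simpl; auto.
Qed.

Lemma lift_functional {X : Type} (f : pfun X) :
  functional f -> functional (lift f).
Proof.
  intros Hf [x b] [y1 b1] [y2 b2]; unfold lift; simpl.
  intros [_ [-> H1]] [_ [-> H2]].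
  now rewrite (Hf x y1 y2 H1 H2).
Qed.

Lemma lift_reflects_eq {X : Type} (f g : pfun X) :
  (forall p q, lift f p q <-> lift g p q) -> forall x y, f x y <-> g x y.
Proof.
  intros H x y; specialize (H (x, false) (y, true)); unfold lift in H.
  simpl in H; tauto.
Qed.

Lemma lift_interp {X : Type} (s : sym) (f g : pfun X) (p q : X * bool) :
  s <> Comp -> (lift (interp s f g) p q <-> interp s (lift f) (lift g) p q).
Proof.
  intro Hs; destruct p as [x b], q as [y b'].
  destruct s; try (exfalso; apply Hs; reflexivity); simpl;
    rewrite ?dom_lift; unfold lift; simpl;
    destruct b, b'; firstorder (try discriminate).
Qed.

Lemma lift_comp_empty {X : Type} (f g : pfun X) (p q : X * bool) :
  ~ interp Comp (lift f) (lift g) p q.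
Proof.
  simpl; unfold lift; intros [r [[_ [Hr _]] [Hr' _]]]; congruence.
Qed.

Lemma op_with_comp {T : Type} (o : ops T) (c : T -> T -> T) (s : sym) :
  s <> Comp -> op (with_comp o c) s = op o s.
Proof. destruct s; try reflexivity; now intro H. Qed.

Definition zero_comp {T : Type} (rs : T -> T -> T) (a _ : T) : T := rs a a.

Lemma rs_self_empty {T X : Type} (o : ops T) (h : T -> pfun X) :
  (forall a b x y, h (op_rs o a b) x y <-> interp Rs (h a) (h b) x y) ->
  forall a x y, ~ h (op_rs o a a) x y.
Proof.
  intros HR a x y H; apply HR in H; destruct H as [H Hdom].
  apply Hdom; exists y; exact H.
Qed.

Lemma representable_le_refl (sigma : sym -> Prop) {T : Type} (o : ops T) :
  sigma Rs -> representable sigma o -> forall a, le (op_rs o) a a.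
Proof.
  intros Hrs [X [h [_ [Hinj Hop]]]] a.
  pose proof (Hop Rs Hrs) as HR; simpl in HR.
  unfold le, dres; apply Hinj; intros x y; rewrite HR; simpl.
  split; [tauto|]; intro H; split; [exact H|].
  intros [w Hw]; exact (rs_self_empty o h HR a x w Hw).
Qed.

Lemma representable_zero_comp (sigma : sym -> Prop) {T : Type} (o : ops T) :
  sigma Rs -> ~ sigma Comp -> representable sigma o ->
  representable (add_comp sigma) (with_comp o (zero_comp (op_rs o))).
Proof.
  intros Hrs Hnc [X [h [Hfun [Hinj Hop]]]].
  pose proof (Hop Rs Hrs) as HR; simpl in HR.
  exists (X * bool)%type, (fun a => lift (h a)); split; [|split].
  - intro a; exact (lift_functional _ (Hfun a)).
  - intros a b H; exact (Hinj a b (lift_reflects_eq _ _ H)).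
  - intros s [Hs | ->] a b p q.
    + assert (Hc : s <> Comp) by (intros ->; contradiction).
      rewrite op_with_comp, <- lift_interp by exact Hc.
      destruct p as [x bx], q as [y by_]; unfold lift; simpl.
      rewrite (Hop s Hs a b x y); tauto.
    + simpl op; unfold zero_comp; split.
      * intros [_ [_ H]]; destruct (rs_self_empty o h HR a _ _ H).
      * intro H; destruct (lift_comp_empty _ _ _ _ H).
Qed.

Lemma comp_left_distr_right_const {T : Type} (rs : T -> T -> T)
    (c : T -> T -> T) :
  (forall a, le rs a a) -> (forall a s s', c a s = c a s') ->
  comp_left_distr rs c.
Proof.
  intros Hrefl Hconst S [s0 Hs0] m _ a; split.
  - intros t [s [_ ->]]; rewrite (Hconst a s m); apply Hrefl.
  - intros l Hl; rewrite (Hconst a m s0).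
    exact (Hl _ (ex_intro _ s0 (conj Hs0 eq_refl))).
Qed.

Theorem lemma6p2 (sigma : sym -> Prop) (Hrs : sigma Rs) (Hnc : ~ sigma Comp)
  (T : Type) (o : ops T)
  (Hrep : representable sigma o)
  (Hsep : atoms_separating (op_rs o)) :
  exists c : T -> T -> T,
    representable (add_comp sigma) (with_comp o c) /\
    atoms_separating (op_rs (with_comp o c)) /\
    comp_left_distr (op_rs (with_comp o c)) c.
Proof.
  exists (zero_comp (op_rs o)); split; [|split].
  - exact (representable_zero_comp sigma o Hrs Hnc Hrep).
  - exact Hsep.
  - apply comp_left_distr_right_const.
    + exact (representable_le_refl sigma o Hrs Hrep).
    + reflexivity.
Qed.
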